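(* Let $\mathbb E$ be a finitely complete category such that, for every object $X$, every internal group in $Pt_X\mathbb E$ has as underlying split epimorphism an isomorphism. Then for every object $X$, every internal reflexive graph on $X$ that admits an internal groupoid structure is a relation on $X$, i.e. it is a subobject of the indiscrete relation $\nabla_X$ in $RGh_X\mathbb E$ (equivalently $(d_0,d_1):X_1\to X\times X$ is a monomorphism).
   Context: $Pt_X\mathbb E$ is the category of split epimorphisms $f:A\to X$ with chosen section $s$, morphisms commuting with $f$ and $s$. An internal reflexive graph on $X$ is $d_0,d_1:X_1\to X$ with $s_0:X\to X_1$, $d_0s_0=1=d_1s_0$; $RGh_X\mathbb E$ is the category of these with morphisms identity on $X$, having terminal object $\nabla_X=(X\times X,p_0,p_1,(1,1))$. An internal groupoid structure on such a graph is an associative unital composition on $X_1\times_XX_1$ with identities $s_0$ and inverses. *)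

Declare Scope cat_scope.
Set Implicit Arguments.
Unset Strict Implicit.

Record Category := {
  Ob :> Type;
  Hom : Ob -> Ob -> Type;
  comp : forall (a b c : Ob), Hom b c -> Hom a b -> Hom a c;
  idm : forall a : Ob, Hom a a;
  comp_assoc : forall a b c d (h : Hom c d) (g : Hom b c) (f : Hom a b),
      comp h (comp g f) = comp (comp h g) f;
  comp_id_l : forall a b (f : Hom a b), comp (idm b) f = f;
  comp_id_r : forall a b (f : Hom a b), comp f (idm a) = f
}.
Arguments comp {C a b c} _ _ : rename.
Arguments idm {C} a : rename.
Arguments Hom {C} _ _ : rename.

Notation "g \o f" := (comp g f) (at level 40, left associativity) : cat_scope.
Open Scope cat_scope.

Section Defs.
Variable C : Category.

Definition is_iso {a b : C} (f : Hom a b) : Prop :=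
  exists g : Hom b a, g \o f = idm a /\ f \o g = idm b.

Definition is_mono {a b : C} (f : Hom a b) : Prop :=
  forall (y : C) (g h : Hom y a), f \o g = f \o h -> g = h.

Definition is_terminal (t : C) : Prop :=
  forall a : C, exists u : Hom a t, forall v : Hom a t, v = u.

Definition is_pullback {A B Z P : C} (f : Hom A Z) (g : Hom B Z)
    (p1 : Hom P A) (p2 : Hom P B) : Prop :=
  f \o p1 = g \o p2 /\
  forall (Q : C) (q1 : Hom Q A) (q2 : Hom Q B), f \o q1 = g \o q2 ->
    exists u : Hom Q P, (p1 \o u = q1 /\ p2 \o u = q2) /\
      forall v : Hom Q P, p1 \o v = q1 -> p2 \o v = q2 -> v = u.

Definition is_product {A B P : C} (p1 : Hom P A) (p2 : Hom P B) : Prop :=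
  forall (Q : C) (q1 : Hom Q A) (q2 : Hom Q B),
    exists u : Hom Q P, (p1 \o u = q1 /\ p2 \o u = q2) /\
      forall v : Hom Q P, p1 \o v = q1 -> p2 \o v = q2 -> v = u.

Definition finitely_complete : Prop :=
  (exists t : C, is_terminal t) /\
  forall (A B Z : C) (f : Hom A Z) (g : Hom B Z),
    exists (P : C) (p1 : Hom P A) (p2 : Hom P B), is_pullback f g p1 p2.

(* An internal group in Pt_X C on the point (A, f, s), where (P, p1, p2) is
   the product (A,f,s) x (A,f,s) in Pt_X C, i.e. the pullback A x_X A of f
   along f.  Multiplication m : P -> A and inverse i : A -> A are morphisms
   in Pt_X C; the unit is necessarily the section s (the unique morphism from
   the terminal object (X,1,1) of Pt_X C).  The group axioms are the
   commutative diagrams, written on generalized elements u : Y -> P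
   (u stands for the pair (p1 u, p2 u)). *)
Definition internal_group_in_Pt {X A P : C} (f : Hom A X) (s : Hom X A)
    (p1 : Hom P A) (p2 : Hom P A) (m : Hom P A) (i : Hom A A) : Prop :=
  (
      f \o m = f \o p1 /\
      (forall u : Hom X P, p1 \o u = s -> p2 \o u = s -> m \o u = s) /\
      f \o i = f /\ i \o s = s/\
      (forall (Y : C) (u : Hom Y P), p1 \o u = s \o f \o p2 \o u ->
          m \o u = p2 \o u) /\
      (forall (Y : C) (u : Hom Y P), p2 \o u = s \o f \o p1 \o u ->
          m \o u = p1 \o u) /\
      (forall (Y : C) (u : Hom Y P), p1 \o u = i \o p2 \o u ->
          m \o u = s \o f \o p2 \o u) /\
      (forall (Y : C) (u : Hom Y P), p2 \o u = i \o p1 \o u ->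
          m \o u = s \o f \o p1 \o u)/\
      (forall (Y : C) (u v w w' : Hom Y P),
          p1 \o v = m \o u -> p1 \o w = p2 \o u -> p2 \o w = p2 \o v ->
          p1 \o w' = p1 \o u -> p2 \o w' = m \o w ->
          m \o v = m \o w')).

Definition reflexive_graph {X X1 : C} (d0 d1 : Hom X1 X) (s0 : Hom X X1) : Prop :=
  d0 \o s0 = idm X /\ d1 \o s0 = idm X.

(* An internal groupoid structure on the reflexive graph, where (P, p1, p2)
   is the object X1 x_X X1 of composable pairs, the pullback of d1 along d0:
   a pair (g, h) with d1 g = d0 h is composed to m (g,h) : d0 g -> d1 h. *)
Definition groupoid_structure {X X1 P : C} (d0 d1 : Hom X1 X) (s0 : Hom X X1)
    (p1 p2 : Hom P X1) (m : Hom P X1) (i : Hom X1 X1) : Prop :=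
  ( d0 \o m = d0 \o p1 /\ d1 \o m = d1 \o p2 /\
      d0 \o i = d1 /\ d1 \o i = d0/\
      (forall (Y : C) (u : Hom Y P), p1 \o u = s0 \o d0 \o p2 \o u ->
          m \o u = p2 \o u) /\
      (forall (Y : C) (u : Hom Y P), p2 \o u = s0 \o d1 \o p1 \o u ->
          m \o u = p1 \o u) /\
      (forall (Y : C) (u : Hom Y P), p2 \o u = i \o p1 \o u ->
          m \o u = s0 \o d0 \o p1 \o u) /\
      (forall (Y : C) (u : Hom Y P), p1 \o u = i \o p2 \o u ->
          m \o u = s0 \o d1 \o p2 \o u)/\
      (forall (Y : C) (u v w w' : Hom Y P),
          p1 \o v = m \o u -> p1 \o w = p2 \o u -> p2 \o w = p2 \o v ->
          p1 \o w' = p1 \o u -> p2 \o w' = m \o w ->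
          m \o v = m \o w')).

End Defs.


(* A groupoid is a relation as soon as every loop b (an arrow with d0 b = d1 b)
   is an identity: for parallel g and h, g h^-1 is a loop, so
   g = (g h^-1) h = h.  The loops form the object A = X1 x_{X x X} X, split
   over X by the identities, and the groupoid composition restricts to an
   internal group structure on (A, x, s) in Pt_X.  By hypothesis x is then an
   isomorphism, so its section s, which picks the identity loops, exhausts A. *)

Ltac rassoc := repeat rewrite <- comp_assoc.
Ltac rassoc_in H := repeat rewrite <- comp_assoc in H.

Section Limits.
Context {C : Category}.

Lemma pullback_ext {A B Z P : C} (f : Hom A Z) (g : Hom B Z) p1 p2 :
  is_pullback f g p1 p2 -> forall Y (v w : Hom Y P),
  p1 \o v = p1 \o w -> p2 \o v = p2 \o w -> v = w.
Proof.
  intros [Hc H] Y v w E1 E2.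
  destruct (H Y (p1 \o v) (p2 \o v)) as [u [_ Hu]].
  { rewrite !comp_assoc, Hc; reflexivity. }
  rewrite (Hu v) by auto. symmetry; apply Hu; auto.
Qed.

Lemma pullback_lift {A B Z P : C} (f : Hom A Z) (g : Hom B Z) p1 p2 :
  is_pullback f g p1 p2 -> forall Y q1 q2, f \o q1 = g \o q2 ->
  exists u : Hom Y P, p1 \o u = q1 /\ p2 \o u = q2.
Proof.
  intros [Hc H] Y q1 q2 E. destruct (H Y q1 q2 E) as [u [Hu _]]. eauto.
Qed.

Lemma product_ext {A B P : C} (p1 : Hom P A) (p2 : Hom P B) :
  is_product p1 p2 -> forall Y (v w : Hom Y P),
  p1 \o v = p1 \o w -> p2 \o v = p2 \o w -> v = w.
Proof.
  intros H Y v w E1 E2.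
  destruct (H Y (p1 \o v) (p2 \o v)) as [u [_ Hu]].
  rewrite (Hu v) by auto. symmetry; apply Hu; auto.
Qed.

Lemma product_lift {A B P : C} (p1 : Hom P A) (p2 : Hom P B) :
  is_product p1 p2 -> forall Y q1 q2,
  exists u : Hom Y P, p1 \o u = q1 /\ p2 \o u = q2.
Proof.
  intros H Y q1 q2. destruct (H Y q1 q2) as [u [Hu _]]. eauto.
Qed.

Lemma section_inverse_of_iso {A B : C} {f : Hom A B} {s : Hom B A} :
  is_iso f -> f \o s = idm B -> s \o f = idm A.
Proof.
  intros [g [Hgf Hfg]] Hfs.
  replace s with g; auto.
  rewrite <- (comp_id_l s), <- Hgf, <- comp_assoc, Hfs, comp_id_r; auto.
Qed.

End Limits.
Arguments pullback_ext {C A B Z P f g p1 p2} _ _ _ _ _ _.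
Arguments pullback_lift {C A B Z P f g p1 p2} _ {Y q1 q2} _.
Arguments product_ext {C A B P p1 p2} _ _ _ _ _ _.
Arguments product_lift {C A B P p1 p2} _ _ _ _.

Definition loop_object {C : Category} {X X1 A : C} (d0 d1 : Hom X1 X)
    (a : Hom A X1) (x : Hom A X) : Prop :=
  d0 \o a = x /\ d1 \o a = x /\ is_mono a /\
  forall Y (b : Hom Y X1), d0 \o b = d1 \o b -> exists u, a \o u = b.

Section Groupoid.
Context {C : Category} {X X1 P : C} {d0 d1 : Hom X1 X} {s0 : Hom X X1}
  {p1 p2 m : Hom P X1} {i : Hom X1 X1}.

Hypothesis Hs0 : reflexive_graph d0 d1 s0.
Hypothesis HP : is_pullback d1 d0 p1 p2.
Hypothesis HG : groupoid_structure d0 d1 s0 p1 p2 m i.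

Lemma d0_s0 : d0 \o s0 = idm X. Proof. apply Hs0. Qed.
Lemma d1_s0 : d1 \o s0 = idm X. Proof. apply Hs0. Qed.

Lemma d0_m Y (u : Hom Y P) : d0 \o (m \o u) = d0 \o (p1 \o u).
Proof. destruct HG as (G & _). rewrite !comp_assoc, G; auto. Qed.

Lemma d1_m Y (u : Hom Y P) : d1 \o (m \o u) = d1 \o (p2 \o u).
Proof. destruct HG as (_ & G & _). rewrite !comp_assoc, G; auto. Qed.

Lemma d0_i Y (g : Hom Y X1) : d0 \o (i \o g) = d1 \o g.
Proof. destruct HG as (_ & _ & G & _). rewrite !comp_assoc, G; auto. Qed.

Lemma d1_i Y (g : Hom Y X1) : d1 \o (i \o g) = d0 \o g.
Proof. destruct HG as (_ & _ & _ & G & _). rewrite !comp_assoc, G; auto. Qed.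

Lemma m_unit_l Y (u : Hom Y P) :
  p1 \o u = s0 \o (d0 \o (p2 \o u)) -> m \o u = p2 \o u.
Proof.
  destruct HG as (_ & _ & _ & _ & G & _). intro E.
  apply G. rewrite E, !comp_assoc; auto.
Qed.

Lemma m_unit_r Y (u : Hom Y P) :
  p2 \o u = s0 \o (d1 \o (p1 \o u)) -> m \o u = p1 \o u.
Proof.
  destruct HG as (_ & _ & _ & _ & _ & G & _). intro E.
  apply G. rewrite E, !comp_assoc; auto.
Qed.

Lemma m_inv_r Y (u : Hom Y P) :
  p2 \o u = i \o (p1 \o u) -> m \o u = s0 \o (d0 \o (p1 \o u)).
Proof.
  destruct HG as (_ & _ & _ & _ & _ & _ & G & _). intro E.
  rewrite G by (rewrite E, comp_assoc; auto). rassoc; auto.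
Qed.

Lemma m_inv_l Y (u : Hom Y P) :
  p1 \o u = i \o (p2 \o u) -> m \o u = s0 \o (d1 \o (p2 \o u)).
Proof.
  destruct HG as (_ & _ & _ & _ & _ & _ & _ & G & _). intro E.
  rewrite G by (rewrite E, comp_assoc; auto). rassoc; auto.
Qed.

Lemma m_assoc Y (u v w w' : Hom Y P) :
  p1 \o v = m \o u -> p1 \o w = p2 \o u -> p2 \o w = p2 \o v ->
  p1 \o w' = p1 \o u -> p2 \o w' = m \o w ->
  m \o v = m \o w'.
Proof. destruct HG as (_ & _ & _ & _ & _ & _ & _ & _ & G). apply G. Qed.

Lemma composable_pair {Y} (g h : Hom Y X1) :
  d1 \o g = d0 \o h -> exists u : Hom Y P, p1 \o u = g /\ p2 \o u = h.
Proof. apply (pullback_lift HP). Qed.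

Lemma inv_s0 : i \o s0 = s0.
Proof.
  destruct (composable_pair s0 (i \o s0)) as [t [Ht1 Ht2]].
  { rewrite d0_i; auto. }
  transitivity (m \o t).
  - rewrite m_unit_l, Ht2; auto.
    rewrite Ht1, Ht2, d0_i, d1_s0, comp_id_r; auto.
  - rewrite m_inv_r, Ht1, d0_s0, comp_id_r; auto. rewrite Ht1, Ht2; auto.
Qed.

(* (g h^-1) h = g (h^-1 h) = g *)
Lemma div_mul {Y} {g h : Hom Y X1} {u v : Hom Y P} :
  d1 \o g = d1 \o h ->
  p1 \o u = g -> p2 \o u = i \o h -> p1 \o v = m \o u -> p2 \o v = h ->
  m \o v = g.
Proof.
  intros Hgh U1 U2 V1 V2.
  destruct (composable_pair (i \o h) h) as [w [W1 W2]].
  { rewrite d1_i; auto. }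
  assert (Hw : m \o w = s0 \o (d1 \o h)).
  { rewrite m_inv_l, W2; auto. rewrite W1, W2; auto. }
  destruct (composable_pair g (m \o w)) as [w' [W'1 W'2]].
  { rewrite d0_m, W1, d0_i; auto. }
  transitivity (m \o w').
  - apply m_assoc with u w; congruence.
  - rewrite m_unit_r, W'1; auto. rewrite W'1, W'2, Hw, Hgh; auto.
Qed.

Lemma parallel_eq_of_trivial_loops :
  (forall Y (b : Hom Y X1), d0 \o b = d1 \o b -> b = s0 \o (d0 \o b)) ->
  forall Y (g h : Hom Y X1), d0 \o g = d0 \o h -> d1 \o g = d1 \o h -> g = h.
Proof.
  intros Htriv Y g h D0 D1.
  destruct (composable_pair g (i \o h)) as [u [U1 U2]].
  { rewrite d0_i; auto. }
  assert (Hdiv : m \o u = s0 \o (d0 \o g)).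
  { rewrite (Htriv _ (m \o u)), d0_m, U1; auto.
    rewrite d0_m, d1_m, U1, U2, d1_i; auto. }
  destruct (composable_pair (m \o u) h) as [v [V1 V2]].
  { rewrite Hdiv, comp_assoc, d1_s0, comp_id_l; auto. }
  rewrite <- (div_mul D1 U1 U2 V1 V2).
  rewrite m_unit_l, V2; auto. rewrite V1, V2, Hdiv, D0; auto.
Qed.

Section Loops.
Context {A : C} {a : Hom A X1} {x : Hom A X}.
Hypothesis Hloop : loop_object d0 d1 a x.

Lemma loop_d0 : d0 \o a = x. Proof. apply Hloop. Qed.
Lemma loop_d1 : d1 \o a = x. Proof. apply Hloop. Qed.
Lemma loop_mono : is_mono a. Proof. apply Hloop. Qed.

Lemma loop_lift {Y} (b : Hom Y X1) :
  d0 \o b = d1 \o b -> exists u, a \o u = b /\ x \o u = d0 \o b.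
Proof.
  intro Hb. destruct Hloop as (_ & _ & _ & L).
  destruct (L Y b Hb) as [u Hu]. exists u.
  rewrite <- loop_d0, <- comp_assoc, Hu; auto.
Qed.

Section LoopGroup.
Context {P' : C} (r1 r2 : Hom P' A) (s : Hom X A) (mA : Hom P' A)
  (iA : Hom A A) (w0 : Hom P' P).
Hypothesis Hs : a \o s = s0.
Hypothesis Hw1 : p1 \o w0 = a \o r1.
Hypothesis Hw2 : p2 \o w0 = a \o r2.
Hypothesis HmA : a \o mA = m \o w0.
Hypothesis HiA : a \o iA = i \o a.

Lemma loop_unit_section : x \o s = idm X.
Proof. rewrite <- loop_d0, <- comp_assoc, Hs; apply d0_s0. Qed.

Lemma w0_p1 Y (u : Hom Y P') : p1 \o (w0 \o u) = a \o (r1 \o u).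
Proof. rewrite !comp_assoc, Hw1; auto. Qed.

Lemma w0_p2 Y (u : Hom Y P') : p2 \o (w0 \o u) = a \o (r2 \o u).
Proof. rewrite !comp_assoc, Hw2; auto. Qed.

Lemma loop_mul Y (u : Hom Y P') : a \o (mA \o u) = m \o (w0 \o u).
Proof. rewrite !comp_assoc, HmA; auto. Qed.

Lemma loop_inv Y (g : Hom Y A) : a \o (iA \o g) = i \o (a \o g).
Proof. rewrite !comp_assoc, HiA; auto. Qed.

Lemma loop_s Y (g : Hom Y X) : a \o (s \o g) = s0 \o g.
Proof. rewrite comp_assoc, Hs; auto. Qed.

Lemma loop_mul_unit :
  (forall (Y : C) (u : Hom Y P'), r1 \o u = s \o x \o r2 \o u ->
      mA \o u = r2 \o u) /\
  (forall (Y : C) (u : Hom Y P'), r2 \o u = s \o x \o r1 \o u ->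
      mA \o u = r1 \o u).
Proof.
  split; intros Y u Hu; rassoc_in Hu; apply loop_mono.
  - rewrite loop_mul, m_unit_l, w0_p2; auto.
    rewrite w0_p1, w0_p2, Hu, loop_s, (comp_assoc d0), loop_d0; auto.
  - rewrite loop_mul, m_unit_r, w0_p1; auto.
    rewrite w0_p1, w0_p2, Hu, loop_s, (comp_assoc d1), loop_d1; auto.
Qed.

Lemma loop_mul_inv :
  (forall (Y : C) (u : Hom Y P'), r1 \o u = iA \o r2 \o u ->
      mA \o u = s \o x \o r2 \o u) /\
  (forall (Y : C) (u : Hom Y P'), r2 \o u = iA \o r1 \o u ->
      mA \o u = s \o x \o r1 \o u).
Proof.
  split; intros Y u Hu; rassoc_in Hu; apply loop_mono; rassoc.
  - rewrite loop_mul, m_inv_l, w0_p2, (comp_assoc d1), loop_d1, loop_s; auto.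
    rewrite w0_p1, w0_p2, Hu, loop_inv; auto.
  - rewrite loop_mul, m_inv_r, w0_p1, (comp_assoc d0), loop_d0, loop_s; auto.
    rewrite w0_p1, w0_p2, Hu, loop_inv; auto.
Qed.

Lemma loop_mul_assoc Y (u v w w' : Hom Y P') :
  r1 \o v = mA \o u -> r1 \o w = r2 \o u -> r2 \o w = r2 \o v ->
  r1 \o w' = r1 \o u -> r2 \o w' = mA \o w ->
  mA \o v = mA \o w'.
Proof.
  intros E1 E2 E3 E4 E5. apply loop_mono. rewrite !loop_mul.
  apply m_assoc with (w0 \o u) (w0 \o w);
    rewrite ?w0_p1, ?w0_p2, <- ?loop_mul; congruence.
Qed.

Lemma loop_group_laws : internal_group_in_Pt x s r1 r2 mA iA.
Proof.
  destruct loop_mul_unit as [Ul Ur]. destruct loop_mul_inv as [Il Ir].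
  refine (conj _ (conj _ (conj _ (conj _
    (conj Ul (conj Ur (conj Il (conj Ir loop_mul_assoc)))))))).
  - rewrite <- loop_d0, <- !comp_assoc, HmA, d0_m, Hw1; auto.
  - intros u Hu1 Hu2. apply loop_mono.
    rewrite loop_mul, m_unit_l, w0_p2, Hu2; auto.
    rewrite w0_p1, w0_p2, Hu1, Hu2, Hs, d0_s0, comp_id_r; auto.
  - rewrite <- loop_d0, <- comp_assoc, HiA, d0_i, loop_d1, loop_d0; auto.
  - apply loop_mono. rewrite loop_inv, Hs; apply inv_s0.
Qed.

End LoopGroup.

Lemma loop_group_exists {P'} {r1 r2 : Hom P' A} :
  is_pullback x x r1 r2 ->
  exists s mA iA, x \o s = idm X /\ a \o s = s0 /\
    internal_group_in_Pt x s r1 r2 mA iA.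
Proof.
  intro HP'.
  destruct (loop_lift s0) as [s [Hs _]].
  { rewrite d0_s0, d1_s0; auto. }
  destruct (composable_pair (a \o r1) (a \o r2)) as [w0 [Hw1 Hw2]].
  { rewrite !comp_assoc, loop_d0, loop_d1; apply HP'. }
  destruct (loop_lift (m \o w0)) as [mA [HmA _]].
  { rewrite d0_m, d1_m, Hw1, Hw2, !comp_assoc, loop_d0, loop_d1; apply HP'. }
  destruct (loop_lift (i \o a)) as [iA [HiA _]].
  { rewrite d0_i, d1_i, loop_d0, loop_d1; auto. }
  exists s, mA, iA. split; [|split; auto].
  - apply loop_unit_section; auto.
  - apply loop_group_laws with w0; auto.
Qed.

(* Once x is invertible its inverse is s, so every loop factors through s0. *)
Lemma loops_trivial_of_iso {s : Hom X A} :
  is_iso x -> x \o s = idm X -> a \o s = s0 ->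
  forall Y (b : Hom Y X1), d0 \o b = d1 \o b -> b = s0 \o (d0 \o b).
Proof.
  intros Hx Hxs Hs Y b Hb.
  destruct (loop_lift b Hb) as [u [Hu Hxu]].
  rewrite <- Hxu, <- Hu, comp_assoc, <- Hs, <- (comp_assoc a),
    (section_inverse_of_iso Hx Hxs), comp_id_r; auto.
Qed.

End Loops.

End Groupoid.

Lemma loop_object_exists {C : Category} {X X1 XX : C} {d0 d1 : Hom X1 X}
    {q0 q1 : Hom XX X} {e : Hom X1 XX} :
  finitely_complete C -> is_product q0 q1 -> q0 \o e = d0 -> q1 \o e = d1 ->
  exists (A : C) (a : Hom A X1) (x : Hom A X), loop_object d0 d1 a x.
Proof.
  intros [_ Hpb] Hprod He0 He1.
  destruct (product_lift Hprod X (idm X) (idm X)) as [diag [Hdiag0 Hdiag1]].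
  destruct (Hpb _ _ _ e diag) as (A & a & x & HA).
  assert (Hea : e \o a = diag \o x) by apply HA.
  assert (Ha0 : d0 \o a = x).
  { rewrite <- He0, <- comp_assoc, Hea, comp_assoc, Hdiag0, comp_id_l; auto. }
  assert (Ha1 : d1 \o a = x).
  { rewrite <- He1, <- comp_assoc, Hea, comp_assoc, Hdiag1, comp_id_l; auto. }
  exists A, a, x. split; [exact Ha0|]. split; [exact Ha1|]. split.
  - intros Y u v E. apply (pullback_ext HA); auto.
    rewrite <- Ha0, <- !comp_assoc, E; auto.
  - intros Y b Hb.
    destruct (pullback_lift HA (Y := Y) (q1 := b) (q2 := d0 \o b)) as [u [Hu _]].
    { apply (product_ext Hprod); rewrite !comp_assoc.
      - rewrite He0, Hdiag0, comp_id_l; auto.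
      - rewrite He1, Hdiag1, comp_id_l; auto. }
    eauto.
Qed.

Theorem mainTheorem13 (C : Category) :
  finitely_complete C ->
  (forall (X A P : C) (f : Hom A X) (s : Hom X A) (p1 p2 : Hom P A)
          (m : Hom P A) (i : Hom A A),
      f \o s = idm X -> is_pullback f f p1 p2 ->
      internal_group_in_Pt f s p1 p2 m i -> is_iso f) ->
  forall (X X1 P : C) (d0 d1 : Hom X1 X) (s0 : Hom X X1)
         (p1 p2 : Hom P X1) (m : Hom P X1) (i : Hom X1 X1),
    reflexive_graph d0 d1 s0 -> is_pullback d1 d0 p1 p2 ->
    groupoid_structure d0 d1 s0 p1 p2 m i ->
    forall (XX : C) (q0 q1 : Hom XX X) (e : Hom X1 XX),
      is_product q0 q1 -> q0 \o e = d0 -> q1 \o e = d1 -> is_mono e.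
Proof.
  intros Hfc Hgroup_iso X X1 P d0 d1 s0 p1 p2 m i Hrefl HP HG XX q0 q1 e
    Hprod He0 He1.
  destruct (loop_object_exists Hfc Hprod He0 He1) as (A & a & x & Hloop).
  destruct (proj2 Hfc _ _ _ x x) as (P' & r1 & r2 & HP').
  destruct (loop_group_exists Hrefl HP HG Hloop HP')
    as (s & mA & iA & Hxs & Has & Hgroup).
  pose proof (loops_trivial_of_iso Hloop
    (Hgroup_iso _ _ _ x s r1 r2 mA iA Hxs HP' Hgroup) Hxs Has) as Htriv.
  intros Y g h E.
  apply (parallel_eq_of_trivial_loops Hrefl HP HG Htriv).
  - rewrite <- He0, <- !comp_assoc, E; auto.
  - rewrite <- He1, <- !comp_assoc, E; auto.
Qed.
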